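(* Let $S\in\mathbb{R}^{n\times n}$ and $D\in\mathbb{R}^{r\times r}$ be real diagonal matrices and let $X\in\mathbb{R}^{n\times r}$ be such that $X^{T}X$ is diagonal and $SX=X(D+X^{T}X)$. Then there exists a scaled permutation $Y\in\mathbb{R}^{n\times r}$ such that $SY=Y(D+Y^{T}Y)$, $Y^{T}Y=X^{T}X$, and $\langle S,YY^{T}\rangle=\langle S,XX^{T}\rangle$.
   Context: A matrix is a scaled permutation if it has at most one nonzero entry in each column and at most one nonzero entry in each row. $\langle A,B\rangle=\mathrm{tr}(A^{T}B)$. *)

From mathcomp Require Import all_boot all_order all_algebra.
From mathcomp Require Import reals.
Set Implicit Arguments. Unset Strict Implicit. Unset Printing Implicit Defensive.
Import Order.TTheory GRing.Theory Num.Theory.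
Local Open Scope ring_scope.

Definition frob_inner (R : pzRingType) (m n : nat) (A B : 'M[R]_(m, n)) : R :=
  \tr (A^T *m B).

Definition scaled_perm (R : pzRingType) (m n : nat) (A : 'M[R]_(m, n)) : Prop :=
  (forall j : 'I_n, forall i1 i2 : 'I_m, A i1 j != 0 -> A i2 j != 0 -> i1 = i2) /\
  (forall i : 'I_m, forall j1 j2 : 'I_n, A i j1 != 0 -> A i j2 != 0 -> j1 = j2).

From mathcomp Require Import all_boot all_order all_algebra.
From mathcomp Require Import reals.
Import Order.TTheory GRing.Theory Num.Theory.
Local Open Scope ring_scope.
Set Implicit Arguments. Unset Strict Implicit.

(* Let g_j be the squared norm of column j of X and l_j = D_jj + g_j. The
   equation S X = X (D + X^T X) says that column j is supported on the rows i
   with S_ii = l_j. For each eigenvalue mu, the nonzero columns with l_j = mu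
   are pairwise orthogonal and supported on the rows with S_ii = mu, so there
   are at most as many of them as such rows. The nonzero columns can therefore
   be matched injectively to rows of the same eigenvalue; placing sqrt g_j at
   the matched entry of column j gives Y, which has the Gram matrix of X, the
   same eigen-relation, and
   tr(S Y Y^T) = tr(diag l Y^T Y) = tr(diag l X^T X) = tr(S X X^T). *)

Lemma fiberwise_injection (I J : finType) (K : eqType) (kI : I -> K) (kJ : J -> K)
    (P : pred J) (i0 : I) :
  (forall k, #|[pred j | P j && (kJ j == k)]| <= #|[pred i | kI i == k]|)%N ->
  exists2 f : J -> I, {in P &, injective f} & {in P, forall j, kI (f j) = kJ j}.
Proof.
move=> le_fibers.
pose fibJ k := enum [pred j | P j && (kJ j == k)].
pose fibI k := enum [pred i | kI i == k].
pose f j := nth i0 (fibI (kJ j)) (index j (fibJ (kJ j))).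
have index_lt j : P j -> (index j (fibJ (kJ j)) < size (fibI (kJ j)))%N.
  move=> Pj; rewrite -cardE; apply: leq_trans (le_fibers _).
  by rewrite cardE index_mem mem_enum inE /= Pj eqxx.
have kIf j : P j -> kI (f j) = kJ j.
  by move=> /index_lt/(mem_nth i0); rewrite mem_enum inE => /eqP.
exists f => // j j' Pj Pj' eq_f.
have eq_k : kJ j = kJ j' by rewrite -kIf // eq_f kIf.
have lt_j := index_lt j Pj; have lt_j' := index_lt j' Pj'.
rewrite /f eq_k in eq_f lt_j; move/eqP: eq_f.
rewrite nth_uniq ?enum_uniq // => /eqP eq_index.
by apply: (index_inj j _ _ eq_index); rewrite mem_enum inE /= -?eq_k eqxx andbT.
Qed.

Lemma diag_mx_intertwineP (R : pzRingType) m k (s : 'rV[R]_m) (l : 'rV[R]_k)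
    (Z : 'M[R]_(m, k)) :
  diag_mx s *m Z = Z *m diag_mx l <-> forall i j, s 0 i * Z i j = Z i j * l 0 j.
Proof.
rewrite mul_diag_mx mul_mx_diag; split=> [/matrixP eqZ i j | eqZ].
  by have := eqZ i j; rewrite !mxE.
by apply/matrixP => i j; rewrite !mxE.
Qed.

Lemma frob_inner_intertwine (R : comPzRingType) m k (s : 'rV[R]_m)
    (L : 'M[R]_k) (Z : 'M[R]_(m, k)) :
  diag_mx s *m Z = Z *m L -> frob_inner (diag_mx s) (Z *m Z^T) = \tr (L *m (Z^T *m Z)).
Proof.
move=> eqZ; rewrite /frob_inner tr_diag_mx [in LHS]mulmxA eqZ.
by rewrite [in LHS]mxtrace_mulC [in LHS]mulmxA [in LHS]mxtrace_mulC.
Qed.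

Lemma leq_unitmx_mul (F : fieldType) k m (A : 'M[F]_(k, m)) (B : 'M[F]_(m, k)) :
  A *m B \in unitmx -> (k <= m)%N.
Proof.
by move=> /mxrank_unit <-; apply: leq_trans (mxrankM_maxr A B) (rank_leq_row B).
Qed.

Section EigenColumns.

Variables (R : rcfType) (n r : nat) (s : 'rV[R]_n) (l g : 'rV[R]_r).
Variable X : 'M[R]_(n, r).
Hypothesis X_gram : X^T *m X = diag_mx g.
Hypothesis X_eig : forall i j, s 0 i * X i j = X i j * l 0 j.

Lemma gram_diagE j : g 0 j = \sum_i X i j ^+ 2.
Proof.
have := congr1 (fun M : 'M[R]_r => M j j) X_gram; rewrite /= !mxE eqxx mulr1n => <-.
by apply: eq_bigr => i _; rewrite mxE expr2.
Qed.

Lemma gram_diag_ge0 j : 0 <= g 0 j.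
Proof. by rewrite gram_diagE; apply: sumr_ge0 => i _; apply: sqr_ge0. Qed.

Lemma eig_support i j : X i j != 0 -> s 0 i = l 0 j.
Proof.
by move=> Xij_neq0; apply: (mulIf Xij_neq0); rewrite X_eig mulrC.
Qed.

Lemma card_eigencols mu :
  leq #|[pred j | (g 0 j != 0) && (l 0 j == mu)]| #|[pred i | s 0 i == mu]|.
Proof.
set J := [pred j | _]; set I := [pred i | _].
pose Z := mxsub (@enum_val _ I) (@enum_val _ J) X.
have Z_gram : Z^T *m Z = diag_mx (\row_b g 0 (enum_val b)).
  apply/matrixP => b b'; rewrite !mxE.
  transitivity ((X^T *m X) (enum_val b) (enum_val b')).
    rewrite [RHS]mxE (bigID (mem I)) /= [X in _ + X]big1 ?addr0 => [|i notIi].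
      by rewrite [RHS]big_enum_val; apply: eq_bigr => a _; rewrite !mxE.
    rewrite mxE; have [->|Xij_neq0] := eqVneq (X i (enum_val b)) 0.
      by rewrite mul0r.
    have := enum_valP b; rewrite inE => /andP[_ /eqP eq_mu].
    by move: notIi; rewrite inE (eig_support Xij_neq0) eq_mu eqxx.
  by rewrite X_gram !mxE (inj_eq enum_val_inj).
apply: (leq_unitmx_mul (A := Z^T) (B := Z)).
rewrite Z_gram unitmxE det_diag unitfE; apply/prodf_neq0 => b _.
by have := enum_valP b; rewrite mxE inE => /andP[].
Qed.

Variable f : 'I_r -> 'I_n.
Hypothesis f_inj : {in [pred j | g 0 j != 0] &, injective f}.
Hypothesis f_eig : {in [pred j | g 0 j != 0], forall j, s 0 (f j) = l 0 j}.

Definition matching_mx : 'M[R]_(n, r) :=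
  \matrix_(i, j) if i == f j then Num.sqrt (g 0 j) else 0.

Lemma matching_mx_neq0 i j : matching_mx i j != 0 -> i = f j /\ g 0 j != 0.
Proof.
rewrite mxE; case: ifP => [/eqP -> sqrt_neq0 | _]; last by rewrite eqxx.
by split=> //; apply: contra_neq sqrt_neq0 => ->; apply: sqrtr0.
Qed.

Lemma matching_mx_scaled_perm : scaled_perm matching_mx.
Proof.
split=> [j i1 i2 | i j1 j2] /matching_mx_neq0[eq1 g1] /matching_mx_neq0[eq2 g2].
  by rewrite eq1 eq2.
by apply: f_inj; rewrite ?inE // -eq1 -eq2.
Qed.

Lemma matching_mx_gram : matching_mx^T *m matching_mx = diag_mx g.
Proof.
apply/matrixP => j j'; rewrite !mxE (bigD1 (f j)) //= big1 ?addr0 => [|i /negbTE neq_i].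
  rewrite !mxE eqxx; have [<- | neq_j] := eqVneq j j'.
    by rewrite eqxx -expr2 sqr_sqrtr ?gram_diag_ge0.
  have [g0 | gj_neq0] := eqVneq (g 0 j) 0; first by rewrite g0 sqrtr0 mul0r.
  have [g0' | gj'_neq0] := eqVneq (g 0 j') 0; first by rewrite g0' sqrtr0 if_same mulr0.
  by rewrite ifN ?mulr0 // (inj_in_eq f_inj) ?inE.
by rewrite !mxE neq_i mul0r.
Qed.

Lemma matching_mx_eig i j : s 0 i * matching_mx i j = matching_mx i j * l 0 j.
Proof.
have [->|/matching_mx_neq0[-> gj_neq0]] := eqVneq (matching_mx i j) 0.
  by rewrite mulr0 mul0r.
by rewrite f_eig ?inE // mulrC.
Qed.

End EigenColumns.

Theorem lemma23 (R : realType) (n r : nat)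
  (S : 'M[R]_n) (D : 'M[R]_r) (X : 'M[R]_(n, r)) :
  is_diag_mx S -> is_diag_mx D -> is_diag_mx (X^T *m X) ->
  S *m X = X *m (D + X^T *m X) ->
  exists Y : 'M[R]_(n, r),
    [/\ scaled_perm Y,
        S *m Y = Y *m (D + Y^T *m Y),
        Y^T *m Y = X^T *m X &
        frob_inner S (Y *m Y^T) = frob_inner S (X *m X^T)].
Proof.
(* Without rows X is vacuously a scaled permutation; otherwise ord0 is a
   default row for the matching. *)
case: n => [|n] in S X *.
  by move=> *; exists X; split=> //; split=> [? [] | []].
move=> /diag_mxP[s ->] /diag_mxP[d ->] /diag_mxP[g X_gram].
rewrite X_gram -raddfD /= => eqX.
have X_eig := (diag_mx_intertwineP _ _ _).1 eqX.
have [f f_inj f_eig] := fiberwise_injection (P := fun j => g 0 j != 0)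
  (kI := fun i => s 0 i) (kJ := fun j => (d + g) 0 j) ord0 (card_eigencols X_gram X_eig).
pose Y := matching_mx g f.
have Y_gram : Y^T *m Y = diag_mx g := matching_mx_gram X_gram f_inj.
have eqY : diag_mx s *m Y = Y *m diag_mx (d + g).
  exact/diag_mx_intertwineP/matching_mx_eig.
exists Y; split.
- exact: matching_mx_scaled_perm.
- by rewrite Y_gram -raddfD.
- exact: Y_gram.
- by rewrite (frob_inner_intertwine eqY) (frob_inner_intertwine eqX) Y_gram X_gram.
Qed.
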